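(* Let client $c$ hold a local dataset of $S_c\ge 1$ samples $(\mathbf{x}^p_c(i), s_c(i), y_c(i))$, $i=1,\dots,S_c$, where $\mathbf{x}^p_c(i)\in\mathbb{R}^{d-1}$ are public attributes, $s_c(i)\in\{0,1\}$ is a binary sensitive attribute and $y_c(i)\in\mathbb{R}$ is the target. Let $\theta=(\theta[:p],\theta[s])\in\mathbb{R}^{d-1}\times\mathbb{R}$ be a linear (least squares) regression model with $\theta[s]\neq 0$, predicting $\mathbf{x}^p_c(i)^T\theta[:p]+s_c(i)\theta[s]$, and let $$E_c=\frac{1}{S_c}\sum_{i=1}^{S_c}\big(y_c(i)-\mathbf{x}^p_c(i)^T\theta[:p]-s_c(i)\theta[s]\big)^2$$ be its mean squared error on the local dataset. Consider the model-based attribute inference attack which, for each $i$, outputs $$\hat s_c(i)\in\arg\min_{s\in\{0,1\}}\big(\mathbf{x}^p_c(i)^T\theta[:p]+s\,\theta[s]-y_c(i)\big)^2$$ (ties broken in favor of $1$). Then the accuracy of the attack, $\frac{1}{S_c}\,|\{i:\hat s_c(i)=s_c(i)\}|$, is at least $1-\frac{4E_c}{\theta[s]^2}$.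
   Context: The adversary knows $\theta$, and for every sample $i$ the public attributes $\mathbf{x}^p_c(i)$ and target $y_c(i)$, but not $s_c(i)$. *)

From HB Require Import structures.
From mathcomp Require Import all_boot all_order all_algebra.
Set Implicit Arguments. Unset Strict Implicit. Unset Printing Implicit Defensive.
Import Order.TTheory GRing.Theory Num.Theory.
Local Open Scope ring_scope.

(* Linear model theta = (theta_p, theta_s) in R^(d-1) x R; public attribute
   vectors are row vectors 'rV[R]_n with n = d - 1. *)

Definition dotp (R : pzRingType) (n : nat) (x t : 'rV[R]_n) : R :=
  \sum_(j < n) x 0 j * t 0 j.

Definition pred_lin (R : pzRingType) (n : nat) (tp : 'rV[R]_n) (ts : R)
  (x : 'rV[R]_n) (s : bool) : R := dotp x tp + (s%:R) * ts.

Definition mse (R : fieldType) (n S : nat) (tp : 'rV[R]_n) (ts : R)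
  (xp : 'I_S -> 'rV[R]_n) (sc : 'I_S -> bool) (y : 'I_S -> R) : R :=
  (S%:R)^-1 * \sum_(i < S) (y i - pred_lin tp ts (xp i) (sc i)) ^+ 2.

(* the attack: argmin over s in {0,1} of (pred - y)^2, ties -> 1 (true) *)
Definition attack (R : numDomainType) (n : nat) (tp : 'rV[R]_n) (ts : R)
  (x : 'rV[R]_n) (y : R) : bool :=
  (pred_lin tp ts x true - y) ^+ 2 <= (pred_lin tp ts x false - y) ^+ 2.

Definition accuracy (R : numFieldType) (n S : nat) (tp : 'rV[R]_n) (ts : R)
  (xp : 'I_S -> 'rV[R]_n) (sc : 'I_S -> bool) (y : 'I_S -> R) : R :=
  (S%:R)^-1 * (#|[set i : 'I_S | attack tp ts (xp i) (y i) == sc i]|)%:R.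

From HB Require Import structures.
From mathcomp Require Import all_boot all_order all_algebra.
From mathcomp Require Import ring lra.
Import Order.TTheory GRing.Theory Num.Theory.
Local Open Scope ring_scope.

(* The two candidate predictions differ by theta[s].  When the attack misses,
   the prediction for the wrong value of s is at least as close to y as the
   prediction for the true one, so by the triangle inequality the true
   residual is at least |theta[s]| / 2.  Hence every miss costs at least
   theta[s]^2 / 4 of squared error, and a Markov-type count bounds the
   fraction of misses by 4 E_c / theta[s]^2. *)

Lemma sqr_subr_le4 (R : realDomainType) (a b : R) :
  b ^+ 2 <= a ^+ 2 -> (a - b) ^+ 2 <= 4 * a ^+ 2.
Proof.
move=> le_ba.
have parallelogram : (a + b) ^+ 2 <= 4 * a ^+ 2 - (a - b) ^+ 2 by nra.
have := sqr_ge0 (a + b); lra.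
Qed.

Lemma attack_miss_residual (R : realFieldType) (n : nat) (tp : 'rV[R]_n)
    (ts : R) (x : 'rV[R]_n) (y : R) (s : bool) :
  attack tp ts x y != s -> ts ^+ 2 <= 4 * (y - pred_lin tp ts x s) ^+ 2.
Proof.
rewrite /attack /pred_lin mul1r mul0r addr0.
set d := dotp x tp.
have -> : (y - (d + s%:R * ts)) ^+ 2 = (d + s%:R * ts - y) ^+ 2 by ring.
case: s => /=; rewrite ?mul1r ?mul0r ?addr0 => miss.
- have le : (d - y) ^+ 2 <= (d + ts - y) ^+ 2.
    by rewrite leNgt; apply: contra miss => /ltW ->.
  have -> : ts ^+ 2 = (d + ts - y - (d - y)) ^+ 2 by ring.
  exact: sqr_subr_le4.
- have le : (d + ts - y) ^+ 2 <= (d - y) ^+ 2 by move: miss; case: (_ <= _).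
  have -> : ts ^+ 2 = (d - y - (d + ts - y)) ^+ 2 by ring.
  exact: sqr_subr_le4.
Qed.

Lemma card_setC_mul_le_sum (R : numDomainType) (I : finType) (A : {set I})
    (c : R) (f : I -> R) :
  (forall i, 0 <= f i) -> (forall i, i \notin A -> c <= f i) ->
  #|~: A|%:R * c <= \sum_i f i.
Proof.
move=> f_ge0 f_ge_c.
rewrite -sum1_card natr_sum mulr_suml [X in _ <= X](bigID [in A]) /=.
rewrite -[X in X <= _]add0r lerD ?sumr_ge0 //.
rewrite big_mkcond [X in _ <= X]big_mkcond /=.
apply: ler_sum => i _; rewrite in_setC.
by case: (boolP (i \notin A)) => // /f_ge_c; rewrite mul1r.
Qed.

Theorem proposition1 (R : realFieldType) (n S : nat) (hS : (1 <= S)%N)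
  (tp : 'rV[R]_n) (ts : R) (hts : ts != 0)
  (xp : 'I_S -> 'rV[R]_n) (sc : 'I_S -> bool) (y : 'I_S -> R) :
  1 - 4 * mse tp ts xp sc y / ts ^+ 2 <= accuracy tp ts xp sc y.
Proof.
set hits := [set i : 'I_S | attack tp ts (xp i) (y i) == sc i].
set err := \sum_(i < S) (y i - pred_lin tp ts (xp i) (sc i)) ^+ 2.
have count_misses : #|~: hits|%:R * ts ^+ 2 <= 4 * err.
  rewrite mulr_sumr; apply: card_setC_mul_le_sum => i.
    by rewrite mulr_ge0 ?sqr_ge0.
  by rewrite inE; apply: attack_miss_residual.
have card_hits : #|hits|%:R = S%:R - #|~: hits|%:R :> R.
  by rewrite -[in S%:R](card_ord S) -(cardsC hits) natrD addrK.
rewrite /accuracy /mse -/err -/hits card_hits.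
have S_gt0 : 0 < (S%:R : R) by rewrite ltr0n.
have ts2_gt0 : 0 < ts ^+ 2 by rewrite exprn_even_gt0.
rewrite -subr_ge0.
have -> : S%:R^-1 * (S%:R - #|~: hits|%:R) - (1 - 4 * (S%:R^-1 * err) / ts ^+ 2)
    = (4 * err - #|~: hits|%:R * ts ^+ 2) / (S%:R * ts ^+ 2).
  by field; rewrite hts gt_eqF.
by rewrite divr_ge0 ?subr_ge0 // mulr_ge0 // ltW.
Qed.
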